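(* Let $\tilde L$ be a minimum-size counterexample. For any two meet-irreducible elements $m_1,m_2$ of $\tilde L$, there exists a join-irreducible element $j$ of $\tilde L$ with $j\le m_1$ and $j\le m_2$.
   Context: For a poset $P$, $x$ upper covers $y$ (and $y$ lower covers $x$) if $y<x$ with nothing strictly between. Join-irreducible: upper covers exactly one element; meet-irreducible: lower covers exactly one element. For $x\in P$, ${\uparrow}x=\{y: x\le y\}$. A counterexample is a finite lattice $L$ with $|L|>1$ in which every join-irreducible $j$ satisfies $|{\uparrow}j|>|L|/2$; a minimum-size counterexample is a counterexample $\tilde L$ such that no counterexample has fewer elements. *)

From mathcomp Require Import all_boot all_order.
Set Implicit Arguments. Unset Strict Implicit. Unset Printing Implicit Defensive.
Import Order.Theory.
Local Open Scope order_scope.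

Definition covers {d} {T : finPOrderType d} (x y : T) : bool :=
  (y < x) && [forall z : T, ~~ ((y < z) && (z < x))].

Definition join_irr {d} {T : finPOrderType d} (j : T) : bool :=
  #|[set y : T | covers j y]| == 1%N.

Definition meet_irr {d} {T : finPOrderType d} (m : T) : bool :=
  #|[set x : T | covers x m]| == 1%N.

Definition upset {d} {T : finPOrderType d} (x : T) : {set T} :=
  [set y : T | x <= y].

Definition counterexample {d} (L : finLatticeType d) : Prop :=
  (1 < #|L|)%N /\ forall j : L, join_irr j -> (#|L| < 2 * #|upset j|)%N.

Definition min_counterexample {d} (L : finLatticeType d) : Prop :=
  counterexample L /\
  forall d' (L' : finLatticeType d'), counterexample L' -> (#|L| <= #|L'|)%N.

(* Suppose no join-irreducible lies below both m1 and m2.  Then m1 /\ m2 is the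
   bottom, since any element above the bottom dominates an atom, and atoms are
   join-irreducible.  Deleting m1 and m2 leaves a meet-closed set containing the
   top, hence a smaller lattice S, and S is again a counterexample.  Indeed, let
   y be join-irreducible in S with lower cover u.  If y is join-irreducible in L,
   at most half of the deleted elements lie above y (two of them would put y
   below m1 /\ m2).  Otherwise some deleted z < y is not below u; then y is the
   unique upper cover of z, z is join-irreducible in L with upset {z} + upset y,
   and no deleted element lies above y.  In both cases the bound |L| < 2|upset|
   in L transfers to S, contradicting minimality. *)

From HB Require Import structures.
From mathcomp Require Import all_boot all_order.
From mathcomp Require Import zify.
Set Implicit Arguments. Unset Strict Implicit. Unset Printing Implicit Defensive.
Import Order.Theory.
Local Open Scope order_scope.

Section Covers.
Variables (d : Order.disp_t) (T : finPOrderType d).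

Lemma card_upset_lt (x y : T) : x < y -> (#|upset y| < #|upset x|)%N.
Proof.
move=> xy; apply: proper_card; apply/properP; split.
  by apply/subsetP => v; rewrite !inE; apply/le_trans/ltW.
by exists x; rewrite !inE ?lexx ?(lt_geF xy).
Qed.

Lemma lower_cover (z j : T) : z < j -> exists2 w, covers j w & z <= w.
Proof.
move=> zj; pose P w := (z <= w) && (w < j).
have Pz : P z by rewrite /P lexx zj.
case: (arg_minnP (fun w => #|upset w|) Pz) => w /andP[zw wj] wmin.
exists w => //; rewrite /covers wj; apply/forallP => v; apply/negP => /andP[wv vj].
have := wmin v; rewrite /P (le_trans zw (ltW wv)) vj => /(_ isT).
by rewrite leqNgt card_upset_lt.
Qed.

Lemma join_irrP (j : T) :
  join_irr j <-> exists2 u, u < j & forall z, z < j -> z <= u.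
Proof.
split.
  case/cards1P => u covj; have : u \in [set y | covers j y] by rewrite covj inE.
  rewrite inE => /andP[uj _]; exists u => // z /lower_cover[w jw zw].
  have : w \in [set y | covers j y] by rewrite inE.
  by rewrite covj inE => /eqP <-.
case=> u uj below_u; apply/cards1P; exists u; apply/setP => y; rewrite !inE.
apply/idP/eqP => [/andP[yj /forallP noz]|->].
  apply: contraTeq (noz u) => yNu.
  by rewrite negbK uj andbT lt_neqAle yNu below_u.
rewrite /covers uj; apply/forallP => v; apply/negP => /andP[uv vj].
by have := lt_le_trans uv (below_u v vj); rewrite ltxx.
Qed.

Lemma covers_dual (x y : T) : covers (x : T^d) y = covers y x.
Proof.
by rewrite /covers ltEdual; congr andb; apply: eq_forallb => z; rewrite !ltEdual andbC.
Qed.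

Lemma join_irr_dual (x : T) : join_irr (x : T^d) = meet_irr x.
Proof.
rewrite /join_irr /meet_irr; congr (_ == _).
by apply: eq_card => y; rewrite !inE covers_dual.
Qed.

End Covers.

Lemma upper_cover d (T : finPOrderType d) (m z : T) :
  m < z -> exists2 w, covers w m & w <= z.
Proof.
by move=> mz; have [w] := @lower_cover _ T^d z m mz; rewrite covers_dual; exists w.
Qed.

Lemma meet_irrP d (T : finPOrderType d) (m : T) :
  meet_irr m <-> exists2 v, m < v & forall z, m < z -> v <= z.
Proof. by rewrite -join_irr_dual join_irrP. Qed.

Lemma meet_irr_neq_top d (T : finPOrderType d) (tp m : T) :
  (forall z, z <= tp) -> meet_irr m -> m != tp.
Proof.
move=> tp_max /meet_irrP[v mv _]; apply: contraTneq mv => ->.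
by rewrite lt_leAnge tp_max andbF.
Qed.

Section FinLattice.
Variables (d : Order.disp_t) (L : finLatticeType d).

Lemma exists_bottom (x0 : L) : exists bt : L, forall z, bt <= z.
Proof.
by exists (\big[Order.meet/x0]_(z : L) z) => z; rewrite (bigD1 z) //= leIl.
Qed.

Lemma exists_top (x0 : L) : exists tp : L, forall z, z <= tp.
Proof.
by exists (\big[Order.join/x0]_(z : L) z) => z; rewrite (bigD1 z) //= leUl.
Qed.

Lemma join_irr_below (bt x : L) :
  (forall z, bt <= z) -> bt < x -> exists2 j, join_irr j & j <= x.
Proof.
move=> bt_min /upper_cover[j /andP[btj /forallP noz] jx]; exists j => //.
apply/join_irrP; exists bt => // z zj; apply: contraTT (noz z) => /negbTE zNbt.
by rewrite negbK zj andbT lt_neqAle bt_min andbT; apply: contraFneq zNbt => ->.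
Qed.

Lemma meet_neq_meet_irr (m x y : L) :
  meet_irr m -> x != m -> y != m -> x `&` y != m.
Proof.
case/meet_irrP=> v mv above_v xNm yNm; apply/eqP => xym.
have mx : m < x by rewrite lt_neqAle eq_sym xNm -xym leIl.
have my : m < y by rewrite lt_neqAle eq_sym yNm -xym leIr.
have : v <= x `&` y by rewrite lexI !above_v.
by rewrite xym (lt_geF mv).
Qed.

Lemma counterexample_top_not_join_irr (tp : L) :
  counterexample L -> (forall z, z <= tp) -> ~~ join_irr tp.
Proof.
case=> L_gt1 upset_big tp_max; apply/negP => /upset_big.
have -> : #|upset tp| = 1%N.
  by apply/eqP/cards1P; exists tp; apply/setP => z; rewrite !inE eq_le tp_max.
by rewrite ltnNge L_gt1.
Qed.

End FinLattice.

Record meetClosedTop d (L : finLatticeType d) := MeetClosedTop {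
  mct_pred : pred L;
  mct_top : L;
  mct_topP : mct_pred mct_top;
  mct_top_max : forall z, z <= mct_top;
  mct_meet : forall x y, mct_pred x -> mct_pred y -> mct_pred (x `&` y) }.

Definition sublattice d (L : finLatticeType d) (C : meetClosedTop L) : Type :=
  {x : L | mct_pred C x}.
HB.instance Definition _ d L C := Finite.copy (@sublattice d L C) {x : L | mct_pred C x}.

Section Sublattice.
Variables (d : Order.disp_t) (L : finLatticeType d) (C : meetClosedTop L).
Local Notation S := (sublattice C).

Definition sub_le (x y : S) := val x <= val y.

Lemma sub_le_refl : reflexive sub_le.
Proof. by move=> x; apply: lexx. Qed.

Lemma sub_le_anti : antisymmetric sub_le.
Proof. by move=> x y /le_anti; apply: val_inj. Qed.

Lemma sub_le_trans : transitive sub_le.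
Proof. by move=> x y z; apply: le_trans. Qed.

HB.instance Definition _ :=
  Order.Le_isPOrder.Build d S sub_le_refl sub_le_anti sub_le_trans.

Lemma le_val (x y : S) : (val x <= val y) = (x <= y).
Proof. by []. Qed.

Lemma lt_val (x y : S) : (val x < val y) = (x < y).
Proof. by rewrite !lt_neqAle le_val val_eqE. Qed.

Definition sub_meet (x y : S) : S :=
  exist _ (val x `&` val y) (mct_meet (valP x) (valP y)).

Definition sub_join_val (x y : S) : L :=
  \big[Order.meet/mct_top C]_(z | mct_pred C z && (val x `|` val y <= z)) z.

Lemma sub_join_valP (x y : S) : mct_pred C (sub_join_val x y).
Proof.
rewrite /sub_join_val; elim/big_ind: _ => [|a b|z /andP[] //].
  exact: mct_topP.
exact: mct_meet.
Qed.

Definition sub_join (x y : S) : S := exist _ (sub_join_val x y) (sub_join_valP x y).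

Lemma sub_meetP (x y z : S) : (x <= sub_meet y z) = (x <= y) && (x <= z).
Proof. by rewrite -!le_val lexI. Qed.

Lemma sub_joinP (x y z : S) : (sub_join x y <= z) = (x <= z) && (y <= z).
Proof.
rewrite -!le_val -leUx /=; apply/idP/idP => [|xyz].
  apply: le_trans; rewrite /sub_join_val; elim/big_ind: _ => [|a b|w /andP[] //].
  - exact: mct_top_max.
  - by move=> xya xyb; rewrite lexI xya.
by rewrite /sub_join_val (bigD1 (val z)) ?leIl //= (valP z).
Qed.

HB.instance Definition _ :=
  Order.POrder_MeetJoin_isLattice.Build d S sub_meetP sub_joinP.

Lemma card_sublattice : #|{: S}| = #|[set x | mct_pred C x]|.
Proof. by rewrite cardsE card_sig. Qed.

Lemma card_sub_upset (y : S) :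
  #|upset y| = #|[set x in upset (val y) | mct_pred C x]|.
Proof.
rewrite -(card_imset _ val_inj); apply: eq_card => x; rewrite !inE.
apply/imsetP/andP => [[z]|[yx Px]].
  by rewrite inE -le_val => yz ->; rewrite (valP z).
by exists (exist _ x Px); rewrite // inE -le_val.
Qed.

Lemma join_irr_sublattice (y : S) : join_irr y ->
  exists2 u, mct_pred C u && (u < val y) &
             forall z, mct_pred C z -> z < val y -> z <= u.
Proof.
case/join_irrP=> u uy below_u; exists (val u); first by rewrite (valP u) lt_val.
by move=> z Pz zy; rewrite (le_val (exist _ z Pz)) below_u // -lt_val.
Qed.

End Sublattice.

Section DeleteMeetIrreducibles.
Variables (d : Order.disp_t) (L : finLatticeType d) (bt tp m1 m2 : L).
Hypotheses (bt_min : forall z, bt <= z) (tp_max : forall z, z <= tp).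
Hypotheses (m1_irr : meet_irr m1) (m2_irr : meet_irr m2) (m12 : m1 `&` m2 = bt).
Local Notation D := [set m1; m2].

Lemma top_notin_deleted : tp \notin D.
Proof.
by rewrite !inE negb_or !(eq_sym tp) !(meet_irr_neq_top tp_max).
Qed.

Lemma deleted_meet_closed (x y : L) : x \notin D -> y \notin D -> x `&` y \notin D.
Proof.
by rewrite !inE !negb_or => /andP[? ?] /andP[? ?]; rewrite !meet_neq_meet_irr.
Qed.

Definition without_pair : meetClosedTop L :=
  @MeetClosedTop d L (fun x => x \notin D) tp
    top_notin_deleted tp_max deleted_meet_closed.
Local Notation S := (sublattice without_pair : finLatticeType d).

Lemma card_without_pair : #|L| = (#|S| + #|D|)%N.
Proof.
rewrite card_sublattice -(cardsC D) addnC.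
by congr (_ + _)%N; apply: eq_card => x; rewrite !inE.
Qed.

Lemma card_upset_without_pair (y : S) :
  #|upset (val y)| = (#|upset y| + #|D :&: upset (val y)|)%N.
Proof.
rewrite card_sub_upset -(cardsID (~: D) (upset (val y))).
by congr (_ + _)%N; apply: eq_card => x; rewrite !inE /= ?inE ?negbK.
Qed.

Lemma below_deleted_pair (x z w : L) :
  x \in D -> z \in D -> x != z -> w <= x -> w <= z -> w = bt.
Proof.
rewrite !inE => /orP[]/eqP-> /orP[]/eqP-> //; rewrite ?eqxx // => _ wx wz;
  by apply/le_anti; rewrite bt_min -m12 lexI wx wz.
Qed.

Lemma card_deleted_upset (y : L) : y != bt -> (2 * #|D :&: upset y| <= #|D|)%N.
Proof.
move=> yNbt; have yD x z : x \in D :&: upset y -> z \in D :&: upset y -> x = z.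
  move=> /setIP[xD]; rewrite inE => yx /setIP[zD]; rewrite inE => yz.
  apply: contraTeq yNbt => xNz.
  by rewrite negbK (below_deleted_pair xD zD xNz yx yz).
rewrite cards2; case: eqVneq => [m1m2|_]; last first.
  suff : (#|D :&: upset y| <= 1)%N by lia.
  by apply/card_le1_eqP => x z xA zA; rewrite (yD x z).
suff -> : D :&: upset y = set0 by rewrite cards0.
apply/setP => x; rewrite !inE m1m2 orbb; apply/andP => -[/eqP-> ym2].
have m2bt : m2 = bt by rewrite -m12 m1m2 meetxx.
by move: yNbt; rewrite eq_le bt_min -m2bt ym2.
Qed.

Lemma deleted_meet_irr (z : L) : z \in D -> meet_irr z.
Proof. by rewrite !inE => /orP[]/eqP->. Qed.

Lemma deleted_covered_join_irr (y u z : L) :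
  (forall w, w \notin D -> w < y -> w <= u) -> z \in D -> z < y -> ~~ (z <= u) ->
  [/\ join_irr z, #|upset z| = #|upset y|.+1, D :&: upset y = set0 & #|D| = 2].
Proof.
move=> below_u zD zy zNu.
have zNbt : z != bt by apply: contraNneq zNu => ->.
have above_z x : x \in D -> z <= x -> x = z.
  move=> xD zx; apply: contraTeq zNbt => xNz.
  by rewrite negbK (below_deleted_pair xD zD xNz zx (lexx z)).
have [v zv above_v] := (meet_irrP z).1 (deleted_meet_irr zD).
have vy : v = y.
  have : v <= y by apply: above_v.
  rewrite le_eqVlt => /orP[/eqP // | vy]; case: (boolP (v \in D)) => vD.
    by have := zv; rewrite (above_z v vD (ltW zv)) ltxx.
  by move: zNu; rewrite (le_trans (ltW zv) (below_u v vD vy)).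
have upset_z : upset z = z |: upset y.
  apply/setP => x; rewrite !inE; apply/idP/orP => [zx|[/eqP-> //|yx]].
    case: eqVneq => [|xNz]; [by left | right].
    by rewrite -vy above_v // lt_neqAle eq_sym xNz zx.
  exact: le_trans (ltW zy) yx.
split.
- apply/join_irrP; exists (z `&` u).
    by rewrite lt_neqAle leIl andbT; apply: contraNneq zNu => <-; apply: leIr.
  move=> w wz; case: (boolP (w \in D)) => wD.
    by rewrite (below_deleted_pair wD zD (negbT (lt_eqF wz)) (lexx w) (ltW wz)).
  by rewrite lexI (ltW wz) below_u // (lt_trans wz zy).
- by rewrite upset_z cardsU1 inE (lt_geF zy).
- apply/setP => x; rewrite in_setI in_set0 [x \in upset y]inE.
  apply/andP => -[xD yx]; have := lt_le_trans zy yx.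
  by rewrite (above_z x xD (le_trans (ltW zy) yx)) ltxx.
- rewrite cards2; case: eqVneq => // m1m2; move: zD zNbt.
  by rewrite -m12 m1m2 meetxx !inE orbb => /eqP->; rewrite eqxx.
Qed.

Lemma card_without_pair_gt1 : counterexample L -> (1 < #|S|)%N.
Proof.
move=> Lce; apply: contraTT (counterexample_top_not_join_irr Lce tp_max).
rewrite -leqNgt negbK card_sublattice => /card_le1_eqP S_le1.
have kept_top x : x \notin D -> x = tp.
  by move=> xND; apply: S_le1; rewrite inE //= top_notin_deleted.
have btD : bt \in D.
  apply: contraT => /kept_top bttp; move: top_notin_deleted.
  have -> : tp = m1 by apply/le_anti; rewrite tp_max -bttp bt_min.
  by rewrite !inE eqxx.
have joinD : m1 `|` m2 \in D.
  move: btD; rewrite !inE => /orP[]/eqP btm.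
    by rewrite -btm (join_r (bt_min _)) eqxx orbT.
  by rewrite -btm (join_l (bt_min _)) eqxx.
apply/join_irrP; exists (m1 `|` m2).
  by rewrite lt_neqAle tp_max andbT; apply: contraNneq top_notin_deleted => <-.
move=> z ztp; have : z \in D by apply: contraTT ztp => /kept_top ->; rewrite ltxx.
by rewrite !inE => /orP[]/eqP->; [apply: leUl | apply: leUr].
Qed.

Lemma without_pair_counterexample : counterexample L -> counterexample S.
Proof.
move=> Lce; split; first exact: card_without_pair_gt1.
move=> y /join_irr_sublattice[u /andP[uND uy] below_u].
have := card_upset_without_pair y; have := card_without_pair.
case: (boolP (join_irr (val y))) => [yirr | yNirr].
  have yNbt : val y != bt.
    by apply: contraTneq uy => ->; rewrite lt_leAnge bt_min andbF.
  by have := Lce.2 _ yirr; have := card_deleted_upset yNbt; lia.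
have [z zy zNu] : exists2 z, z < val y & ~~ (z <= u).
  have : ~~ [forall z, (z < val y) ==> (z <= u)].
    apply: contra yNirr => /forallP all_le; apply/join_irrP.
    by exists u => // z; apply/implyP.
  by rewrite negb_forall => /existsP[z]; rewrite negb_imply => /andP[]; exists z.
have zD : z \in D by apply: contraNT zNu => zND; apply: below_u.
case: (deleted_covered_join_irr below_u zD zy zNu) => zirr upset_z Dy D2.
by have := Lce.2 _ zirr; rewrite upset_z Dy cards0 D2; lia.
Qed.

End DeleteMeetIrreducibles.

Theorem corollary2p11 (d : Order.disp_t) (L : finLatticeType d) :
  min_counterexample L ->
  forall m1 m2 : L, meet_irr m1 -> meet_irr m2 ->
  exists j : L, [/\ join_irr j, j <= m1 & j <= m2].
Proof.
move=> [Lce L_min] m1 m2 m1_irr m2_irr.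
case: (boolP [exists j, [&& join_irr j, j <= m1 & j <= m2]]).
  by case/existsP=> j /and3P[]; exists j.
move=> no_common_ji; exfalso.
have [bt bt_min] := exists_bottom m1.
have [tp tp_max] := exists_top m1.
have m12 : m1 `&` m2 = bt.
  apply/le_anti; rewrite bt_min andbT; apply: contraNT no_common_ji => m12Nbt.
  have bt_lt : bt < m1 `&` m2.
    by rewrite lt_neqAle bt_min andbT; apply: contraNneq m12Nbt => <-.
  have [j j_irr] := join_irr_below bt_min bt_lt.
  by rewrite lexI => /andP[jm1 jm2]; apply/existsP; exists j; rewrite j_irr jm1 jm2.
have := L_min _ _ (without_pair_counterexample bt_min tp_max m1_irr m2_irr m12 Lce).
by rewrite (card_without_pair tp_max m1_irr m2_irr) cards2; lia.
Qed.
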